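(* Let $G$ be an amenable locally compact group with left Haar measure $m$. If $(A_i)_{i\in\mathbb I}$ is a Følner net and $L\subseteq G$ is a compact symmetric unit neighborhood, then $(LA_i)_{i\in\mathbb I}$ is a strong Følner net.
   Context: $\mathcal K$: nonempty compact subsets of $G$; $\mathcal K_p$: those of positive Haar measure. Nets are indexed by a directed partially ordered set $(\mathbb I,\prec)$. For $K,A\subseteq G$: Følner boundary $\delta^KA=KA\,\triangle\, A$; strong Følner boundary $\partial_K A=K^{-1}A\cap K^{-1}(G\setminus A)$. A Følner net is a net $(A_i)$ in $\mathcal K_p$ with $\lim_i m(\delta^KA_i)/m(A_i)=0$ for every $K\in\mathcal K$; a strong Følner net is a net $(A_i)$ in $\mathcal K_p$ with $\lim_i m(\partial_KA_i)/m(A_i)=0$ for every $K\in\mathcal K$. $G$ is amenable if it admits a left-invariant mean on $L^\infty(G)$. *)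

From HB Require Import structures.
From mathcomp Require Import all_boot all_order all_algebra.
From mathcomp Require Import all_classical all_reals all_analysis.
Set Implicit Arguments. Unset Strict Implicit. Unset Printing Implicit Defensive.
Import Order.TTheory GRing.Theory Num.Theory.
Import numFieldNormedType.Exports.
Local Open Scope classical_set_scope.
Local Open Scope ring_scope.

Section TopGroup.
Variables (G : ptopologicalType) (mul : G -> G -> G) (inv : G -> G) (one : G).

Definition is_topological_group : Prop :=
  [/\ (forall x y z, mul x (mul y z) = mul (mul x y) z),
      (forall x, mul one x = x /\ mul x one = x),
      (forall x, mul (inv x) x = one /\ mul x (inv x) = one),
      continuous (fun p : G * G => mul p.1 p.2) &
      continuous inv].

Definition is_locally_compact_group : Prop :=
  [/\ is_topological_group, hausdorff_space G & locally_compact [set: G]].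

Definition setmul (K A : set G) : set G :=
  [set z | exists k a, K k /\ A a /\ z = mul k a].
Definition setinv (K : set G) : set G := inv @` K.
Definition ltrans (x : G) (A : set G) : set G := mul x @` A.

Definition folner_bd (K A : set G) : set G :=
  (setmul K A `\` A) `|` (A `\` setmul K A).
Definition strong_folner_bd (K A : set G) : set G :=
  setmul (setinv K) A `&` setmul (setinv K) (~` A).
End TopGroup.

Notation borel G := (g_sigma_algebraType (@open G)).

Section Haar.
Variables (R : realType) (G : ptopologicalType) (mul : G -> G -> G)
  (mu : {measure set (borel G) -> \bar R}).
Local Open Scope ereal_scope.

Definition is_left_haar_measure : Prop :=
  [/\ (forall (x : G) (A : set (borel G)), measurable A ->
          mu (ltrans mul x A) = mu A),
      (forall K : set G, compact K -> mu K < +oo),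
      (forall U : set G, open U -> U !=set0 -> 0 < mu U),
      (forall A : set (borel G), measurable A ->
          mu A = ereal_inf [set mu U | U in [set U : set G | open U /\ A `<=` U]]) &
      (forall U : set G, open U ->
          mu U = ereal_sup [set mu K | K in [set K : set G | compact K /\ K `<=` U]])].
End Haar.

Section Amenable.
Variables (R : realType) (G : ptopologicalType) (mul : G -> G -> G)
  (inv : G -> G) (mu : {measure set (borel G) -> \bar R}).

(* f is (a representative of) an element of L^oo(G, m) *)
Definition ess_bounded (f : borel G -> R) : Prop :=
  measurable_fun [set: borel G] f /\
  exists M : R, {ae mu, forall x, `|f x| <= M}.

Definition is_left_invariant_mean (M : (borel G -> R) -> R) : Prop :=
  (forall f g, ess_bounded f -> ess_bounded g ->
         {ae mu, forall x, f x = g x} -> M f = M g) /\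
  [/\
      (forall f g, ess_bounded f -> ess_bounded g -> M (f \+ g) = M f + M g),
      (forall (c : R) f, ess_bounded f -> M (fun x => c * f x) = c * M f),
      (forall f, ess_bounded f -> {ae mu, forall x, 0 <= f x} -> 0 <= M f),
      M (fun _ => 1) = 1 &
      (forall (x : G) f, ess_bounded f -> M (fun y => f (mul (inv x) y)) = M f)].

Definition amenable : Prop := exists M, is_left_invariant_mean M.
End Amenable.

Definition directed_poset (I : Type) (le : I -> I -> Prop) : Prop :=
  [/\ inhabited I,
      (forall i, le i i),
      (forall i j k, le i j -> le j k -> le i k),
      (forall i j, le i j -> le j i -> i = j) &
      (forall i j, exists k, le i k /\ le j k)].

Definition net_to0 (R : realType) (I : Type) (le : I -> I -> Prop) (a : I -> R)
  : Prop :=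
  forall eps : R, 0 < eps -> exists i0, forall i, le i0 i -> `|a i| < eps.

Section Folner.
Variables (R : realType) (G : ptopologicalType) (mul : G -> G -> G)
  (inv : G -> G) (mu : {measure set (borel G) -> \bar R}).

Definition nonempty_compact (K : set G) : Prop := compact K /\ K !=set0.
Definition compact_pos (A : set G) : Prop :=
  nonempty_compact A /\ (0 < mu A)%E.

Definition folner_net (I : Type) (le : I -> I -> Prop) (A : I -> set G) : Prop :=
  (forall i, compact_pos (A i)) /\
  forall K : set G, nonempty_compact K ->
    net_to0 le (fun i => fine (mu (folner_bd mul K (A i))) / fine (mu (A i))).

Definition strong_folner_net (I : Type) (le : I -> I -> Prop) (A : I -> set G)
  : Prop :=
  (forall i, compact_pos (A i)) /\
  forall K : set G, nonempty_compact K ->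
    net_to0 le (fun i =>
      fine (mu (strong_folner_bd mul inv K (A i))) / fine (mu (A i))).
End Folner.

From HB Require Import structures.
From mathcomp Require Import all_boot all_order all_algebra.
From mathcomp Require Import all_classical all_reals all_analysis.
Import Order.TTheory GRing.Theory Num.Theory.
Set Implicit Arguments. Unset Strict Implicit. Unset Printing Implicit Defensive.
Local Open Scope classical_set_scope.
Local Open Scope ring_scope.

(* Cover the compact set K by finitely many right translates L k_1, ..., L k_n
   with all k_i in K.  If z in A lies in ∂_K(LA), then k z ∉ LA for some k in K,
   say k ∈ L k_i; so k_i z ∉ A, as otherwise k z = (k k_i^-1)(k_i z) ∈ LA.  Hence
   ∂_K(LA) ⊆ (K^-1 L A \ A) ∪ ⋃_i (A ∩ k_i^-1 (G \ A)), and by left invariance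
   m(A ∩ k_i^-1 (G \ A)) = m(k_i A \ A).  With K' = K^-1 L ∪ K this gives
   m(∂_K(LA)) ≤ (n + 1) m(δ^K' A), while m(LA) ≥ m(A). *)

Lemma fine_ratio_le (R : realType) (X Y D a : \bar R) (n : nat) :
  (0 <= X)%E -> (X <= D *+ n)%E -> D \is a fin_num -> (0 <= D)%E ->
  (0 < a)%E -> (a <= Y)%E -> Y \is a fin_num ->
  `|fine X / fine Y| <= (fine D / fine a) *+ n.
Proof.
move: Y D a => [y| |] [d| |] [a| |] //; rewrite -EFin_natmul.
case: X => [x| |] //=; rewrite !lee_fin lte_fin.
move=> x_ge0 le_xd _ d_ge0 a_gt0 le_ay _.
have y_gt0 : 0 < y := lt_le_trans a_gt0 le_ay.
rewrite ger0_norm ?divr_ge0 ?(ltW y_gt0) //.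
apply: (@le_trans _ _ (x / a)); first by rewrite ler_wpM2l // lef_pV2.
by rewrite -mulrnAl ler_wpM2r // invr_ge0 ltW.
Qed.

Lemma continuous_mull (G : ptopologicalType) (mul : G -> G -> G) (c : G) :
  continuous (fun p : G * G => mul p.1 p.2) -> continuous (fun y => mul c y).
Proof.
move=> mul_cont x; have pair_cvg : (fun y : G => (c, y)) @ x --> (c, x).
  by apply: cvg_pair; [exact: cvg_cst | exact: cvg_id].
exact: (cvg_comp _ _ pair_cvg (mul_cont (c, x))).
Qed.

Lemma continuous_mulr (G : ptopologicalType) (mul : G -> G -> G) (c : G) :
  continuous (fun p : G * G => mul p.1 p.2) -> continuous (fun y => mul y c).
Proof.
move=> mul_cont x; have pair_cvg : (fun y : G => (y, c)) @ x --> (x, c).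
  by apply: cvg_pair; [exact: cvg_id | exact: cvg_cst].
exact: (cvg_comp _ _ pair_cvg (mul_cont (x, c))).
Qed.

Lemma compact_setmul (G : ptopologicalType) (mul : G -> G -> G) (X Y : set G) :
  continuous (fun p : G * G => mul p.1 p.2) ->
  compact X -> compact Y -> compact (setmul mul X Y).
Proof.
move=> mul_cont cX cY.
have -> : setmul mul X Y = (fun p : G * G => mul p.1 p.2) @` (X `*` Y).
  apply/seteqP; split=> z.
    by case=> k [a [Xk [Ya ->]]]; exists (k, a).
  by case=> [[k a] [/= Xk Ya] <-]; exists k, a.
apply: continuous_compact; last exact: compact_setX.
exact: continuous_subspaceT.
Qed.

Lemma compact_setinv (G : ptopologicalType) (inv : G -> G) (X : set G) :
  continuous inv -> compact X -> compact (setinv inv X).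
Proof. by move=> inv_cont; apply: continuous_compact; exact: continuous_subspaceT. Qed.

Section BorelSets.
Variable G : ptopologicalType.

Lemma borel_open_measurable (U : set G) : open U -> measurable (U : set (borel G)).
Proof. exact: sub_sigma_algebra. Qed.

Lemma borel_closed_measurable (U : set G) : closed U -> measurable (U : set (borel G)).
Proof.
by move=> cU; rewrite -[U]setCK; apply: measurableC; apply: borel_open_measurable; rewrite openC.
Qed.

Lemma borel_compact_measurable (K : set G) :
  hausdorff_space G -> compact K -> measurable (K : set (borel G)).
Proof. by move=> hG cK; apply: borel_closed_measurable; exact: compact_closed. Qed.

End BorelSets.

Section TopologicalGroup.
Variables (G : ptopologicalType) (mul : G -> G -> G) (inv : G -> G) (one : G).
Hypothesis grp : is_topological_group mul inv one.

Let mulA x y z : mul x (mul y z) = mul (mul x y) z. Proof. by case: grp. Qed.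
Let mul1g x : mul one x = x. Proof. by case: grp => _ unit _ _ _; case: (unit x). Qed.
Let mulVg x : mul (inv x) x = one. Proof. by case: grp => _ _ invK _ _; case: (invK x). Qed.
Let mulgV x : mul x (inv x) = one. Proof. by case: grp => _ _ invK _ _; case: (invK x). Qed.
Let mul_cont : continuous (fun p : G * G => mul p.1 p.2). Proof. by case: grp. Qed.

Lemma setmul_subr (L A : set G) : L one -> A `<=` setmul mul L A.
Proof. by move=> L1 a Aa; exists one, a; rewrite mul1g. Qed.

Lemma setmulA (X Y Z : set G) :
  setmul mul X (setmul mul Y Z) = setmul mul (setmul mul X Y) Z.
Proof.
apply/seteqP; split=> w.
  case=> x [yz [Xx [[y [z [Yy [Zz ->]]]] ->]]].
  by exists (mul x y), z; rewrite mulA; split=> //; exists x, y.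
case=> xy [z [[x [y [Xx [Yy ->]]]] [Zz ->]]].
by exists x, (mul y z); rewrite mulA; do 2!split=> //; exists y, z.
Qed.

Lemma setmul_setinvC (K B : set G) :
  setmul mul (setinv inv K) (~` B) = \bigcup_(k in K) (mul k @^-1` ~` B).
Proof.
apply/seteqP; split=> z.
  by case=> _ [y [[k Kk <-] [nBy ->]]]; exists k => //=; rewrite mulA mulgV mul1g.
case=> k Kk /= nBkz; exists (inv k), (mul k z); split; first by exists k.
by rewrite mulA mulVg mul1g.
Qed.

(* K is contained in L k_0 \cup ... \cup L k_(n-1), with every k_i in K. *)
Definition translate_cover (K L : set G) (n : nat) (ks : nat -> G) : Prop :=
  (forall i, (i < n)%N -> K (ks i)) /\
  (forall k, K k -> exists2 i, (i < n)%N & L (mul k (inv (ks i)))).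

Lemma compact_translate_cover (K L : set G) :
  compact K -> nbhs one L -> exists n ks, translate_cover K L n ks.
Proof.
move=> cK L1; have Lo1 : L° one := nbhs_singleton (nbhs_interior L1).
have open_cover j : open ((fun y => mul y (inv j)) @^-1` L°).
  by apply: (continuousP _).1; [exact: continuous_mulr | exact: open_interior].
move: cK; rewrite compact_cover => /(_ G K _ (fun j _ => open_cover j)).
case=> [k Kk | D sDK covK]; first by exists k => //=; rewrite mulgV.
pose s := finmap.enum_fset D.
exists (size s), (nth one s); split=> [i i_lt | k /covK [j /= jD Lkj]].
  by apply: set_mem; apply: sDK; exact: mem_nth.
exists (index j s); first by rewrite index_mem.
by rewrite nth_index //; exact: interior_subset.
Qed.

Definition escaping (A : set G) (n : nat) (ks : nat -> G) : set G :=
  \bigcup_(i < n) (A `&` mul (ks i) @^-1` ~` A).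

Lemma strong_folner_bd_setmul_sub (K L A : set G) n ks :
  translate_cover K L n ks ->
  strong_folner_bd mul inv K (setmul mul L A) `<=`
    (setmul mul (setmul mul (setinv inv K) L) A `\` A) `|` escaping A n ks.
Proof.
move=> [_ covK] z [KLAz]; rewrite setmul_setinvC => -[k Kk /= notLAkz].
have [Az | nAz] := pselect (A z); last by left; split=> //; rewrite -setmulA.
have [i i_lt Lki] := covK k Kk.
right; exists i => //; split=> // Akiz; apply: notLAkz.
by exists (mul k (inv (ks i))), (mul (ks i) z); rewrite -mulA [mul (inv _) _]mulA mulVg mul1g.
Qed.

End TopologicalGroup.

Section LeftHaarMeasure.
Variables (R : realType) (G : ptopologicalType) (mul : G -> G -> G) (inv : G -> G)
  (one : G) (mu : {measure set (borel G) -> \bar R}).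
Hypotheses (grp : is_topological_group mul inv one) (hausG : hausdorff_space G)
  (haar : is_left_haar_measure mul mu).
Local Open Scope ereal_scope.

Let mul_cont : continuous (fun p : G * G => mul p.1 p.2). Proof. by case: grp. Qed.
Let inv_cont : continuous inv. Proof. by case: grp. Qed.
Let compact_measurable (K : set G) : compact K -> measurable (K : set (borel G)).
Proof. exact: borel_compact_measurable. Qed.

Let open_preimage_setC (k : G) (A : set G) : compact A -> open (mul k @^-1` ~` A).
Proof.
move=> cA; apply: (continuousP _).1; first exact: continuous_mull.
by rewrite openC; exact: compact_closed.
Qed.

Let measurable_escape (k : G) (A : set G) : compact A ->
  measurable ((A `&` mul k @^-1` ~` A) : set (borel G)).
Proof.
move=> cA; apply: measurableI; first exact: compact_measurable.
by apply: borel_open_measurable; exact: open_preimage_setC.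
Qed.

Lemma measurable_strong_folner_bd (K B : set G) : compact K -> compact B ->
  measurable (strong_folner_bd mul inv K B : set (borel G)).
Proof.
move=> cK cB; rewrite /strong_folner_bd (setmul_setinvC grp).
apply: measurableI.
  by apply: compact_measurable; apply: compact_setmul => //; exact: compact_setinv.
apply: borel_open_measurable; apply: bigcup_open => k _; exact: open_preimage_setC.
Qed.

Lemma measurable_escaping (A : set G) n ks : compact A ->
  measurable (escaping mul A n ks : set (borel G)).
Proof. by move=> cA; apply: bigcup_measurable => i _; exact: measurable_escape. Qed.

Lemma measurable_folner_bd (K A : set G) : compact K -> compact A ->
  measurable (folner_bd mul K A : set (borel G)).
Proof.
move=> cK cA; have cKA := compact_setmul mul_cont cK cA.
by apply: measurableU; apply: measurableD; exact: compact_measurable.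
Qed.

Lemma measure_escaping_le (K A : set G) n ks :
  compact K -> compact A -> (forall i, (i < n)%N -> K (ks i)) ->
  mu (escaping mul A n ks) <= mu (folner_bd mul K A) *+ n.
Proof.
move=> cK cA Kks; have [invariant _ _ _ _] := haar.
have -> : mu (folner_bd mul K A) *+ n = \sum_(i < n) mu (folner_bd mul K A).
  by rewrite sumr_const card_ord.
rewrite /escaping bigcup_mkord.
have := @Boole_inequality _ _ (borel G) mu (fun i => A `&` mul (ks i) @^-1` ~` A) n.
move=> /(_ (fun i _ => measurable_escape (ks i) cA)) /le_trans; apply.
apply: lee_sum => i _.
rewrite -[X in X <= _](invariant (ks i) _ (measurable_escape (ks i) cA)).
have -> : ltrans mul (ks i) (A `&` mul (ks i) @^-1` ~` A) = mul (ks i) @` A `\` A.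
  apply/seteqP; split=> [_ [z [Az nAz] <-] | _ [[z Az <-] nAz]].
    by split=> //; exists z.
  by exists z.
have cAi : compact (mul (ks i) @` A).
  by apply: continuous_compact => //; apply: continuous_subspaceT; exact: continuous_mull.
apply: le_measure; rewrite ?inE.
- by apply: measurableD; exact: compact_measurable.
- exact: measurable_folner_bd.
- by move=> _ [[z Az <-] nAz]; left; split=> //; exists (ks i), z; split=> //; exact: Kks.
Qed.

Lemma le_measure_setmul (L A : set G) :
  compact L -> L one -> compact A -> mu A <= mu (setmul mul L A).
Proof.
move=> cL L1 cA; apply: le_measure; rewrite ?inE; first exact: compact_measurable.
  by apply: compact_measurable; exact: compact_setmul.
exact: (setmul_subr grp).
Qed.

Lemma compact_pos_setmul (L A : set G) :
  compact L -> L one -> compact_pos mu A -> compact_pos mu (setmul mul L A).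
Proof.
move=> cL L1 [[cA [a Aa]] muA_gt0]; split; first split.
- exact: compact_setmul.
- by exists a; exact: (setmul_subr grp).
- exact: lt_le_trans muA_gt0 (le_measure_setmul cL L1 cA).
Qed.

Lemma measure_strong_folner_bd_setmul_le (K L A : set G) n ks :
  compact K -> compact L -> compact A -> translate_cover mul inv K L n ks ->
  mu (strong_folner_bd mul inv K (setmul mul L A)) <=
    mu (folner_bd mul (setmul mul (setinv inv K) L `|` K) A) *+ n.+1.
Proof.
move=> cK cL cA cover; set K' := _ `|` K.
have cKL : compact (setmul mul (setinv inv K) L).
  by apply: compact_setmul => //; exact: compact_setinv.
have cK' : compact K' by exact: compactU.
have mKLA : measurable (setmul mul (setmul mul (setinv inv K) L) A `\` A : set (borel G)).
  by apply: measurableD; apply: compact_measurable => //; exact: compact_setmul.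
have mE := measurable_escaping n ks cA.
have bd_le : mu (strong_folner_bd mul inv K (setmul mul L A)) <=
    mu ((setmul mul (setmul mul (setinv inv K) L) A `\` A) `|` escaping mul A n ks).
  apply: le_measure; rewrite ?inE; last by move=> z /(strong_folner_bd_setmul_sub grp cover).
    by apply: measurable_strong_folner_bd => //; exact: compact_setmul.
  exact: measurableU.
apply: le_trans bd_le _.
apply: le_trans (measureU2 _ mKLA mE) _; rewrite muleS; apply: leeD.
  apply: le_measure; rewrite ?inE //; first exact: measurable_folner_bd.
  by move=> z [[k [a [KLk [Aa ->]]]] nAz]; left; split=> //; exists k, a; split=> //; left.
by apply: measure_escaping_le => // i /cover.1 Kk; right.
Qed.

Let fin_num_measure_sub (B K : set G) : compact K ->
  measurable (B : set (borel G)) -> B `<=` K -> mu B \is a fin_num.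
Proof.
move=> cK mB BK; have [_ compact_fin _ _ _] := haar.
rewrite ge0_fin_numE ?measure_ge0 //; apply: le_lt_trans (compact_fin _ cK).
by apply: le_measure; rewrite ?inE //; exact: compact_measurable.
Qed.

Lemma strong_folner_ratio_le (K L : set G) :
  compact L -> nbhs one L -> nonempty_compact K ->
  exists K' n, nonempty_compact K' /\ forall A, compact_pos mu A ->
    (`|fine (mu (strong_folner_bd mul inv K (setmul mul L A))) /
       fine (mu (setmul mul L A))|
     <= (fine (mu (folner_bd mul K' A)) / fine (mu A)) *+ n.+1)%R.
Proof.
move=> cL L1 [cK [k Kk]]; have [n [ks cover]] := compact_translate_cover grp cK L1.
set K' := setmul mul (setinv inv K) L `|` K.
have cK' : compact K'.
  by apply: compactU => //; apply: compact_setmul => //; exact: compact_setinv.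
exists K', n; split=> [|A [[cA _] muA_gt0]]; first by split=> //; exists k; right.
have cLA := compact_setmul mul_cont cL cA.
apply: fine_ratio_le => //.
- exact: measure_strong_folner_bd_setmul_le cK cL cA cover.
- apply: (fin_num_measure_sub (compactU (compact_setmul mul_cont cK' cA) cA)).
    exact: measurable_folner_bd.
  by move=> z [[KAz _] | [Az _]]; [left | right].
- exact: le_measure_setmul cL (nbhs_singleton L1) cA.
- exact: fin_num_measure_sub cLA (compact_measurable cLA) (@subset_refl _ _).
Qed.

End LeftHaarMeasure.

Theorem proposition5p9 (R : realType) (G : ptopologicalType)
  (mul : G -> G -> G) (inv : G -> G) (one : G)
  (mu : {measure set (borel G) -> \bar R})
  (I : Type) (le : I -> I -> Prop) (A : I -> set G) (L : set G) :
  is_locally_compact_group mul inv one ->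
  is_left_haar_measure mul mu ->
  amenable mul inv mu ->
  directed_poset le ->
  folner_net mul mu le A ->
  compact L -> setinv inv L = L -> nbhs one L ->
  strong_folner_net mul inv mu le (fun i => setmul mul L (A i)).
Proof.
move=> [grp hausG _] haar _ _ [folner_pos folner_lim] cL _ L1.
split=> [i | K cK eps eps_gt0].
  by apply: (compact_pos_setmul grp hausG cL); [exact: nbhs_singleton | exact: folner_pos].
have [K' [n [cK' ratio_le]]] := strong_folner_ratio_le grp hausG haar cL L1 cK.
have [i0 small] := folner_lim K' cK' (eps / n.+1%:R) (divr_gt0 eps_gt0 (ltr0Sn _ _)).
exists i0 => i /small ratio_lt; apply: le_lt_trans (ratio_le _ (folner_pos i)) _.
by rewrite -mulr_natr -ltr_pdivlMr //; exact: le_lt_trans (ler_norm _) ratio_lt.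
Qed.
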